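(* Let $(A,\mathcal H)$ be a commutative Hopf algebroid and $I$ a normal Hopf ideal of $\mathcal H$. Then $\{h\in\mathcal H:\sum h_1\otimes_A q(h_2)=h\otimes_Aq(1)\}=\{h\in\mathcal H:\sum q(h_1)\otimes_Ah_2=q(1)\otimes_Ah\}$ as subalgebras of $\mathcal H$, where $q:\mathcal H\to\overline{\mathcal H}/\bar I$ is the canonical projection.
   Context: A commutative Hopf algebroid $(A,\mathcal H)$ over a field $\Bbbk$: commutative $\Bbbk$-algebras $A,\mathcal H$ with algebra maps $s,t:A\to\mathcal H$, $\varepsilon:\mathcal H\to A$, $\Delta:\mathcal H\to\mathcal H\otimes_A\mathcal H$ (left factor an $A$-module via $t$, right via $s$), $\mathcal S:\mathcal H\to\mathcal H$ such that $(\mathcal H,\Delta,\varepsilon)$ is a coassociative counital $A$-coring, $\mathcal Ss=t$, $\mathcal St=s$, $\mathcal S^2=\mathrm{id}$, $\sum\mathcal S(u_1)u_2=t\varepsilon(u)$, $\sum u_1\mathcal S(u_2)=s\varepsilon(u)$ ($\Delta(u)=\sum u_1\otimes_Au_2$). A Hopf ideal: ideal $I$ with $\varepsilon(I)=0$, $\Delta(I)\subseteq$ image of $\mathcal H\otimes_AI+I\otimes_A\mathcal H$, $\mathcal S(I)\subseteq I$. Let $\langle s-t\rangle$ be the ideal generated by all $s(a)-t(a)$, $\overline{\mathcal H}=\mathcal H/\langle s-t\rangle$ with classes $\bar x$ and $A$-algebra structure $\eta(a)=\overline{s(a)}=\overline{t(a)}$, and $\bar I=I/\langle s-t\rangle$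 when $\langle s-t\rangle\subseteq I$. $I$ is normal if $\langle s-t\rangle\subseteq I$ and for every $x\in I$, $\sum\overline{x_2}\otimes_A\mathcal S(x_1)x_3\in\overline{\mathcal H}\otimes_A\mathcal H$ lies in the image of $\bar I\otimes_A\mathcal H$. In the tensor products of the claim, $\mathcal H$ is a right $A$-module via $t$ on the left factor and a left $A$-module via $s$ on the right factor, and $\overline{\mathcal H}/\bar I$ is an $A$-module via $\eta$. *)

From HB Require Import structures.
From mathcomp Require Import all_boot all_order all_algebra.
Set Implicit Arguments. Unset Strict Implicit. Unset Printing Implicit Defensive.
Import GRing.Theory.
Local Open Scope ring_scope.

(* Tensor products over a commutative ring A, via their defining universal   *)
(* property.  An element of (M/KM) (x)_A (N/KN) is represented by a finite    *)
(* formal sum  sum_i m_i (x) n_i  given as a list of pairs; two such lists    *)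
(* denote the same element of the tensor product iff every A-balanced         *)
(* biadditive map M x N -> P (into any abelian group P) that vanishes when    *)
(* one argument lies in the submodule KM resp. KN takes the same value on the *)
(* two sums.  [actM a m] is the right action m.a of A on M, [actN a n] the    *)
(* left action a.n of A on N.  With KM = KN = (fun _ => False) this is just   *)
(* M (x)_A N.                                                                 *)
Definition balanced (A : Type) (M N P : zmodType)
    (actM : A -> M -> M) (actN : A -> N -> N)
    (KM : M -> Prop) (KN : N -> Prop) (b : M -> N -> P) : Prop :=
  [/\ (forall m m' n, b (m + m') n = b m n + b m' n),
      (forall m n n', b m (n + n') = b m n + b m n'),
      (forall a m n, b (actM a m) n = b m (actN a n)),
      (forall m n, KM m -> b m n = 0) &
      (forall m n, KN n -> b m n = 0)].

Definition tensor_eq (A : Type) (M N : zmodType)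
    (actM : A -> M -> M) (actN : A -> N -> N)
    (KM : M -> Prop) (KN : N -> Prop) (x y : seq (M * N)) : Prop :=
  forall (P : zmodType) (b : M -> N -> P), balanced actM actN KM KN b ->
    \sum_(p <- x) b p.1 p.2 = \sum_(p <- y) b p.1 p.2.

Definition tensor3_eq (A : Type) (M1 M2 M3 : zmodType)
    (r1 : A -> M1 -> M1) (l2 r2 : A -> M2 -> M2) (l3 : A -> M3 -> M3)
    (x y : seq (M1 * M2 * M3)) : Prop :=
  forall (P : zmodType) (b : M1 -> M2 -> M3 -> P),
    (forall u u' v w, b (u + u') v w = b u v w + b u' v w) ->
    (forall u v v' w, b u (v + v') w = b u v w + b u v' w) ->
    (forall u v w w', b u v (w + w') = b u v w + b u v w') ->
    (forall a u v w, b (r1 a u) v w = b u (l2 a v) w) ->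
    (forall a u v w, b u (r2 a v) w = b u v (l3 a w)) ->
    \sum_(p <- x) b p.1.1 p.1.2 p.2 = \sum_(p <- y) b p.1.1 p.1.2 p.2.

Section HopfAlgebroid.
Variables (k : fieldType) (A H : comAlgType k).
Variables (s t : {lrmorphism A -> H}).

(* H (x)_A H : left factor a right A-module via t, right factor a left       *)
(* A-module via s.  Elements of H (x)_A H are represented by seq (H * H).     *)
Definition HtH (x y : seq (H * H)) : Prop :=
  tensor_eq (fun a (u : H) => u * t a) (fun a (v : H) => s a * v)
            (fun _ => False) (fun _ => False) x y.

Definition HtHtH (x y : seq (H * H * H)) : Prop :=
  tensor3_eq (fun a (u : H) => u * t a) (fun a (v : H) => s a * v)
             (fun a (v : H) => v * t a) (fun a (w : H) => s a * w) x y.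

Definition st_ideal (x : H) : Prop :=
  exists l : seq (H * A), x = \sum_(p <- l) p.1 * (s p.2 - t p.2).

(* Commutative Hopf algebroid axioms.  The comultiplication is given by a     *)
(* function Delta assigning to each u a representative list of pairs          *)
(* (u_1, u_2) of Delta(u) = sum u_1 (x)_A u_2.  s, t, eps, S are k-algebra   *)
Record hopf_algebroid (eps : {lrmorphism H -> A}) (Delta : H -> seq (H * H))
    (S : {lrmorphism H -> H}) : Prop := {
  Delta_add : forall x y, HtH (Delta (x + y)) (Delta x ++ Delta y);
  Delta_scale : forall (c : k) x,
    HtH (Delta (c *: x)) [seq (c *: p.1, p.2) | p <- Delta x];
  Delta_mul : forall x y,
    HtH (Delta (x * y)) [seq (p.1 * q.1, p.2 * q.2) | p <- Delta x, q <- Delta y];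
  Delta_one : HtH (Delta 1) [:: (1, 1)];
  Delta_s : forall a h,
    HtH (Delta (s a * h)) [seq (s a * p.1, p.2) | p <- Delta h];
  Delta_t : forall a h,
    HtH (Delta (t a * h)) [seq (p.1, t a * p.2) | p <- Delta h];
  eps_s : forall a h, eps (s a * h) = a * eps h;
  eps_t : forall a h, eps (t a * h) = eps h * a;
  Delta_coassoc : forall u,
    HtHtH [seq (q.1, q.2, p.2) | p <- Delta u, q <- Delta p.1]
          [seq (p.1, q.1, q.2) | p <- Delta u, q <- Delta p.2];
  counit_l : forall u, \sum_(p <- Delta u) s (eps p.1) * p.2 = u;
  counit_r : forall u, \sum_(p <- Delta u) t (eps p.2) * p.1 = u;
  S_s : forall a, S (s a) = t a;
  S_t : forall a, S (t a) = s a;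
  S_invol : forall u, S (S u) = u;
  antipode_l : forall u, \sum_(p <- Delta u) S p.1 * p.2 = t (eps u);
  antipode_r : forall u, \sum_(p <- Delta u) p.1 * S p.2 = s (eps u)
}.

Definition is_ideal (I : {pred H}) : Prop :=
  [/\ 0 \in I, (forall x y, x \in I -> y \in I -> x - y \in I) &
      (forall x y, y \in I -> x * y \in I)].

Definition hopf_ideal (eps : {lrmorphism H -> A}) (Delta : H -> seq (H * H))
    (S : {lrmorphism H -> H}) (I : {pred H}) : Prop :=
  [/\ is_ideal I,
      (forall x, x \in I -> eps x = 0),
      (* Delta(I) lies in the image of H (x)_A I + I (x)_A H *)
      (forall x, x \in I -> exists l : seq (H * H),
          all (fun p => (p.1 \in I) || (p.2 \in I)) l /\ HtH (Delta x) l) &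
      (forall x, x \in I -> S x \in I)].

(* Normal Hopf ideal.  The element  sum bar(x_2) (x)_A S(x_1) x_3  of         *)
(* Hbar (x)_A H, Hbar = H/<s-t> (A acting on Hbar via eta(a) = bar(s a)),     *)
(* must lie in the image of Ibar (x)_A H.                                     *)
Definition normal_ideal (Delta : H -> seq (H * H)) (S : {lrmorphism H -> H})
    (I : {pred H}) : Prop :=
  (forall x, st_ideal x -> x \in I) /\
  (forall x, x \in I -> exists l : seq (H * H),
      all (fun p => p.1 \in I) l /\
      tensor_eq (fun a (u : H) => u * s a) (fun a (v : H) => s a * v)
                st_ideal (fun _ => False)
                [seq (q.2, S q.1 * p.2) | p <- Delta x, q <- Delta p.1] l).

End HopfAlgebroid.

From HB Require Import structures.
From mathcomp Require Import all_boot all_order all_algebra.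
From mathcomp Require Import ring.
Set Implicit Arguments. Unset Strict Implicit. Unset Printing Implicit Defensive.
Import GRing.Theory.
Local Open Scope ring_scope.

(* The tensor products are only accessible through balanced maps, so each
   implication is proved by pulling balanced maps back along a map between
   the two tensor products.  For b balanced on (H/I) (x)_A H, the map
   x (x) y |-> sum b(q(y_2), x S(y_1) y_3) is balanced on H (x)_A (H/I):
   normality of I is exactly what makes it vanish for y in I.  It sends
   h (x) q(1) to b(q(1), h) and, by coassociativity, the antipode and the
   counit, sum h_1 (x) q(h_2) to sum b(q(h_1), h_2); this turns the first
   identity into the second.  The converse pulls back along
   q(y) (x) x |-> sum y_1 S(y_3) x (x) q(y_2) in the same way. *)

Lemma additive_sum (U V : zmodType) (f : U -> V) (T : Type) (r : seq T) F :
  (forall x y, f (x + y) = f x + f y) ->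
  f (\sum_(i <- r) F i) = \sum_(i <- r) f (F i).
Proof.
move=> fD; have f0 : f 0 = 0 by apply: (addrI (f 0)); rewrite -fD !addr0.
exact: big_morph.
Qed.
Arguments additive_sum {U V} f {T r F}.

Section HopfAlgebroid.
Variables (k : fieldType) (A H : comAlgType k).
Variables (s t : {lrmorphism A -> H}) (eps : {lrmorphism H -> A}).
Variables (Delta : H -> seq (H * H)) (S : {lrmorphism H -> H}).
Hypothesis HA : hopf_algebroid s t eps Delta S.

(* Stated here so that [S] keeps the coercion it has in [S_s] and [S_t]:
   rewriting with [rmorphM] directly would block those rewrites. *)
Lemma antipodeD x y : S (x + y) = S x + S y. Proof. exact: rmorphD. Qed.
Lemma antipodeM x y : S (x * y) = S x * S y. Proof. exact: rmorphM. Qed.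
Lemma antipode1 : S 1 = 1. Proof. exact: rmorph1. Qed.

Section Sweedler.
Variable P : zmodType.

Definition HtH_balanced (c : H -> H -> P) : Prop :=
  balanced (fun a (u : H) => u * t a) (fun a (v : H) => s a * v)
           (fun _ => False) (fun _ => False) c.

Definition HtHtH_balanced (f : H -> H -> H -> P) : Prop :=
  [/\ forall u u' v w, f (u + u') v w = f u v w + f u' v w,
      forall u v v' w, f u (v + v') w = f u v w + f u v' w,
      forall u v w w', f u v (w + w') = f u v w + f u v w',
      forall a u v w, f (u * t a) v w = f u (s a * v) w &
      forall a u v w, f u (v * t a) w = f u v (s a * w)].

Definition sweedler (c : H -> H -> P) (y : H) : P :=
  \sum_(p <- Delta y) c p.1 p.2.

Definition sweedler2 (f : H -> H -> H -> P) (y : H) : P :=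
  \sum_(p <- Delta y) \sum_(q <- Delta p.1) f q.1 q.2 p.2.

Lemma sweedlerD c : HtH_balanced c -> {morph sweedler c : x y / x + y}.
Proof. by move=> hc x y; rewrite /sweedler (Delta_add HA x y hc) big_cat. Qed.

Lemma sweedler1 c : HtH_balanced c -> sweedler c 1 = c 1 1.
Proof. by move=> hc; rewrite /sweedler (Delta_one HA hc) big_seq1. Qed.

Lemma sweedler_sM c a y : HtH_balanced c ->
  sweedler c (s a * y) = sweedler (fun u v => c (s a * u) v) y.
Proof. by move=> hc; rewrite /sweedler (Delta_s HA a y hc) big_map. Qed.

Lemma sweedler_tM c a y : HtH_balanced c ->
  sweedler c (t a * y) = sweedler (fun u v => c u (t a * v)) y.
Proof. by move=> hc; rewrite /sweedler (Delta_t HA a y hc) big_map. Qed.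

Lemma HtHtH_balanced_HtH f w :
  HtHtH_balanced f -> HtH_balanced (fun u v => f u v w).
Proof. by case=> fD1 fD2 _ fA _; split. Qed.

Lemma HtHtH_balanced_sweedler f : HtHtH_balanced f ->
  HtH_balanced (fun y w => sweedler (fun u v => f u v w) y).
Proof.
move=> hf; have [_ _ fD3 _ fA2] := hf.
split=> //= [y y' w | y w w' | a y w].
- exact: (sweedlerD (HtHtH_balanced_HtH w hf)).
- by rewrite /sweedler -big_split; apply: eq_bigr => p _; rewrite fD3.
rewrite mulrC sweedler_tM; last exact: HtHtH_balanced_HtH.
by apply: eq_bigr => p _; rewrite mulrC fA2.
Qed.

Lemma eq_sweedler2 f g y :
  (forall u v w, f u v w = g u v w) -> sweedler2 f y = sweedler2 g y.
Proof. by move=> e; apply: eq_bigr => p _; apply: eq_bigr => q _; apply: e. Qed.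

Lemma sweedler2_split f g y :
  sweedler2 (fun u v w => f u v w + g u v w) y = sweedler2 f y + sweedler2 g y.
Proof.
by rewrite /sweedler2 -big_split; apply: eq_bigr => p _; rewrite big_split.
Qed.

Lemma sweedler2_sweedler f y :
  sweedler2 f y = sweedler (fun y1 w => sweedler (fun u v => f u v w) y1) y.
Proof. by []. Qed.

Lemma sweedler2D f : HtHtH_balanced f -> {morph sweedler2 f : x y / x + y}.
Proof. by move=> hf; apply: (sweedlerD (HtHtH_balanced_sweedler hf)). Qed.

Lemma sweedler2_1 f : HtHtH_balanced f -> sweedler2 f 1 = f 1 1 1.
Proof.
move=> hf; rewrite sweedler2_sweedler !sweedler1 //.
  exact: HtHtH_balanced_HtH.
exact: HtHtH_balanced_sweedler.
Qed.

Lemma sweedler2_sM f a y : HtHtH_balanced f ->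
  sweedler2 f (s a * y) = sweedler2 (fun u v w => f (s a * u) v w) y.
Proof.
move=> hf; rewrite !sweedler2_sweedler sweedler_sM; last first.
  exact: HtHtH_balanced_sweedler.
by apply: eq_bigr => p _; rewrite sweedler_sM //; apply: HtHtH_balanced_HtH.
Qed.

Lemma sweedler2E f y : HtHtH_balanced f ->
  sweedler2 f y = \sum_(p <- Delta y) sweedler (f p.1) p.2.
Proof.
case=> fD1 fD2 fD3 fA1 fA2.
by have := Delta_coassoc HA y fD1 fD2 fD3 fA1 fA2; rewrite !big_allpairs_dep.
Qed.

Lemma sweedler2_coassoc (f : H -> H -> H -> H -> P) h :
    (forall x, HtHtH_balanced (f x)) ->
    (forall w, HtHtH_balanced (fun x y z => f x y z w)) ->
  \sum_(p <- Delta h) sweedler2 (f p.1) p.2 =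
  \sum_(p <- Delta h) sweedler2 (fun x y z => f x y z p.2) p.1.
Proof.
move=> hf1 hf4; pose F x y z := sweedler (fun u v => f x u v z) y.
have hF : HtHtH_balanced F.
  split=> [x x' y z | x y y' z | x y z z' | a x y z | a x y z]; rewrite /F.
  - rewrite /sweedler -big_split; apply: eq_bigr => q _.
    by have [-> _ _ _ _] := hf4 z.
  - by have [-> _ _ _ _] := HtHtH_balanced_sweedler (hf1 x).
  - by have [_ -> _ _ _] := HtHtH_balanced_sweedler (hf1 x).
  - rewrite sweedler_sM; last exact: HtHtH_balanced_HtH.
    by apply: eq_bigr => q _; have [_ _ _ -> _] := hf4 z.
  - by have [_ _ -> _ _] := HtHtH_balanced_sweedler (hf1 x).
rewrite -[LHS]/(\sum_(p <- Delta h) sweedler (F p.1) p.2) -sweedler2E //.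
by rewrite {1}/sweedler2; apply: eq_bigr => p _; rewrite sweedler2E.
Qed.

End Sweedler.

Variable I : {pred H}.
Hypothesis HN : normal_ideal s t Delta S I.

Section QuotientBalanced.
Variable P : zmodType.

(* The two tensor products of the statement: (H/I) (x)_A H and H (x)_A (H/I). *)
Definition quotl_balanced (b : H -> H -> P) : Prop :=
  balanced (fun a (u : H) => u * s a) (fun a (v : H) => s a * v)
           (fun u => u \in I) (fun _ => False) b.

Definition quotr_balanced (b : H -> H -> P) : Prop :=
  balanced (fun a (u : H) => u * t a) (fun a (v : H) => s a * v)
           (fun _ => False) (fun v => v \in I) b.

Lemma st_ideal_mem a u : s a * u - t a * u \in I.
Proof. by apply: HN.1; exists [:: (u, a)]; rewrite big_seq1 /=; ring. Qed.

Lemma quotl_balanced_tM b a u v :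
  quotl_balanced b -> b (t a * u) v = b (s a * u) v.
Proof.
case=> bD _ _ bI _.
by rewrite -[s a * u](subrK (t a * u)) bD (bI _ _ (st_ideal_mem a u)) add0r.
Qed.

Lemma quotr_balanced_tM b a u v :
  quotr_balanced b -> b u (t a * v) = b u (s a * v).
Proof.
case=> _ bD _ _ bI.
by rewrite -[s a * v](subrK (t a * v)) bD (bI _ _ (st_ideal_mem a v)) add0r.
Qed.

Lemma normal_sweedler2_eq0 d y : quotl_balanced d -> y \in I ->
  sweedler2 (fun y1 y2 y3 => d y2 (S y1 * y3)) y = 0.
Proof.
case=> dD1 dD2 dA dI _ yI; have [l [lI hl]] := HN.2 y yI.
have := hl P d; rewrite /sweedler2 big_allpairs_dep /= => -> //.
  by rewrite big1_seq // => p /andP[_ /(allP lI) /dI].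
by split=> // u v /HN.1 /dI.
Qed.

End QuotientBalanced.

Section LeftToRight.
Variables (P : zmodType) (b : H -> H -> P).
Hypothesis hb : quotl_balanced b.

Let bDl u u' v : b (u + u') v = b u v + b u' v. Proof. by case: hb. Qed.
Let bDr u v v' : b u (v + v') = b u v + b u v'. Proof. by case: hb. Qed.
Let bI u v : u \in I -> b u v = 0. Proof. by case: hb => _ _ _ + _; apply. Qed.
Let bsA a u v : b (s a * u) v = b u (s a * v).
Proof. by case: hb => _ _ bA _ _; rewrite mulrC bA. Qed.
Let btA a u v : b (t a * u) v = b u (s a * v).
Proof. by rewrite quotl_balanced_tM. Qed.

Definition lr_kernel x1 x2 x3 x4 := b x3 (x1 * S x2 * x4).

Definition lr_transfer x y := sweedler2 (lr_kernel x) y.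

Lemma lr_kernel_balanced1 x : HtHtH_balanced (lr_kernel x).
Proof.
rewrite /lr_kernel.
split=> [u u' v w | u v v' w | u v w w' | a u v w | a u v w].
- by rewrite antipodeD mulrDr mulrDl bDr.
- by rewrite bDl.
- by rewrite mulrDr bDr.
- by rewrite antipodeM (S_t HA) bsA; congr (b _ _); ring.
- by rewrite [v * t a]mulrC btA; congr (b _ _); ring.
Qed.

Lemma lr_kernel_balanced4 w : HtHtH_balanced (fun x y z => lr_kernel x y z w).
Proof.
rewrite /lr_kernel.
split=> [x x' y z | x y y' z | x y z z' | a x y z | a x y z].
- by rewrite !mulrDl bDr.
- by rewrite antipodeD mulrDr mulrDl bDr.
- by rewrite bDl.
- by rewrite antipodeM (S_s HA) !mulrA.
- by rewrite antipodeM (S_t HA) bsA; congr (b _ _); ring.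
Qed.

Lemma lr_kernel_counit y w :
  sweedler2 (fun x y z => lr_kernel x y z w) y = b y w.
Proof.
transitivity (b (\sum_(p <- Delta y) s (eps p.1) * p.2) w); last first.
  by rewrite (counit_l HA).
rewrite (additive_sum (b^~ w)) //; apply: eq_bigr => p _.
rewrite bsA -(antipode_r HA) mulr_suml (additive_sum (b p.2)) //.
Qed.

Lemma lr_transfer_balanced : quotr_balanced lr_transfer.
Proof.
rewrite /lr_transfer; split=> // [x x' y | x y y' | a x y | x y yI].
- rewrite -sweedler2_split; apply: eq_sweedler2 => u v w.
  by rewrite /lr_kernel !mulrDl bDr.
- exact: (sweedler2D (lr_kernel_balanced1 x)).
- rewrite sweedler2_sM; last exact: lr_kernel_balanced1.
  by apply: eq_sweedler2 => u v w; rewrite /lr_kernel antipodeM (S_s HA) !mulrA.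
have hd : quotl_balanced (fun u v => b u (x * v)).
  split=> [u u' v | u v v' | a u v | u v uI | //].
  - exact: bDl.
  - by rewrite mulrDr bDr.
  - by rewrite mulrC bsA; congr (b _ _); ring.
  - exact: bI.
rewrite -(normal_sweedler2_eq0 hd yI); apply: eq_sweedler2 => u v w.
by rewrite /lr_kernel mulrA.
Qed.

Lemma lr_transfer_unit h : lr_transfer h 1 = b 1 h.
Proof.
rewrite /lr_transfer sweedler2_1; last exact: lr_kernel_balanced1.
by rewrite /lr_kernel antipode1 !mulr1.
Qed.

Lemma lr_transfer_Delta h : sweedler lr_transfer h = sweedler b h.
Proof.
rewrite [LHS](sweedler2_coassoc h lr_kernel_balanced1 lr_kernel_balanced4).
by apply: eq_bigr => p _; rewrite lr_kernel_counit.
Qed.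

End LeftToRight.

Section RightToLeft.
Variables (P : zmodType) (b : H -> H -> P).
Hypothesis hb : quotr_balanced b.

Let bDl u u' v : b (u + u') v = b u v + b u' v. Proof. by case: hb. Qed.
Let bDr u v v' : b u (v + v') = b u v + b u v'. Proof. by case: hb. Qed.
Let bI u v : v \in I -> b u v = 0. Proof. by case: hb => _ _ _ _; apply. Qed.
Let btA a u v : b (u * t a) v = b u (s a * v). Proof. by case: hb. Qed.
Let btR a u v : b u (v * t a) = b (u * t a) v.
Proof. by rewrite mulrC quotr_balanced_tM // btA. Qed.

Definition rl_kernel x1 x2 x3 x4 := b (x1 * S x3 * x4) x2.

Definition rl_transfer y x :=
  sweedler2 (fun y1 y2 y3 => rl_kernel y1 y2 y3 x) y.

Lemma rl_kernel_balanced1 x : HtHtH_balanced (rl_kernel x).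
Proof.
rewrite /rl_kernel.
split=> [u u' v w | u v v' w | u v w w' | a u v w | a u v w].
- by rewrite bDr.
- by rewrite antipodeD mulrDr mulrDl bDl.
- by rewrite mulrDr bDl.
- by rewrite antipodeM (S_s HA) btR; congr (b _ _); ring.
- by rewrite antipodeM (S_t HA) !mulrA.
Qed.

Lemma rl_kernel_balanced4 w : HtHtH_balanced (fun x y z => rl_kernel x y z w).
Proof.
rewrite /rl_kernel.
split=> [x x' y z | x y y' z | x y z z' | a x y z | a x y z].
- by rewrite !mulrDl bDl.
- by rewrite bDr.
- by rewrite antipodeD mulrDr mulrDl bDl.
- by rewrite -btA; congr (b _ _); ring.
- by rewrite antipodeM (S_s HA) btR; congr (b _ _); ring.
Qed.

Lemma rl_kernel_counit x y : sweedler2 (rl_kernel x) y = b x y.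
Proof.
rewrite sweedler2E; last exact: rl_kernel_balanced1.
transitivity (b x (\sum_(p <- Delta y) t (eps p.2) * p.1)); last first.
  by rewrite (counit_r HA).
rewrite (additive_sum (b x)) //; apply: eq_bigr => p _.
rewrite mulrC btR -(antipode_l HA) mulr_sumr (additive_sum (b^~ p.1)) //.
by apply: eq_bigr => q _; rewrite /rl_kernel mulrA.
Qed.

Lemma rl_transfer_balanced : quotl_balanced rl_transfer.
Proof.
rewrite /rl_transfer; split=> [y y' x | y x x' | a y x | y x yI | //].
- exact: (sweedler2D (rl_kernel_balanced4 x)).
- rewrite -sweedler2_split; apply: eq_sweedler2 => u v w.
  by rewrite /rl_kernel mulrDr bDl.
- rewrite mulrC sweedler2_sM; last exact: rl_kernel_balanced4.
  by apply: eq_sweedler2 => u v w; rewrite /rl_kernel; congr (b _ _); ring.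
have hd : quotl_balanced (fun u v => b (S v * x) u).
  split=> [u u' v | u v v' | a u v | u v uI | //].
  - exact: bDr.
  - by rewrite antipodeD mulrDl bDl.
  - by rewrite antipodeM (S_s HA) [u * s a]mulrC -btA; congr (b _ _); ring.
  - exact: bI.
rewrite -(normal_sweedler2_eq0 hd yI); apply: eq_sweedler2 => u v w.
by rewrite /rl_kernel antipodeM (S_invol HA).
Qed.

Lemma rl_transfer_unit h : rl_transfer 1 h = b h 1.
Proof.
rewrite /rl_transfer sweedler2_1; last exact: rl_kernel_balanced4.
by rewrite /rl_kernel antipode1 !mul1r.
Qed.

Lemma rl_transfer_Delta h : sweedler rl_transfer h = sweedler b h.
Proof.
rewrite -[LHS](sweedler2_coassoc h rl_kernel_balanced1 rl_kernel_balanced4).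
by apply: eq_bigr => p _; rewrite rl_kernel_counit.
Qed.

End RightToLeft.

Lemma left_to_right h :
    tensor_eq (fun a (u : H) => u * t a) (fun a (v : H) => s a * v)
              (fun _ => False) (fun v => v \in I) (Delta h) [:: (h, 1)] ->
  tensor_eq (fun a (u : H) => u * s a) (fun a (v : H) => s a * v)
            (fun u => u \in I) (fun _ => False) (Delta h) [:: (1, h)].
Proof.
move=> hL P b hb; rewrite big_seq1 -(lr_transfer_unit hb).
rewrite -[LHS]/(sweedler b h) -(lr_transfer_Delta hb).
by rewrite [LHS](hL P _ (lr_transfer_balanced hb)) big_seq1.
Qed.

Lemma right_to_left h :
    tensor_eq (fun a (u : H) => u * s a) (fun a (v : H) => s a * v)
              (fun u => u \in I) (fun _ => False) (Delta h) [:: (1, h)] ->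
  tensor_eq (fun a (u : H) => u * t a) (fun a (v : H) => s a * v)
            (fun _ => False) (fun v => v \in I) (Delta h) [:: (h, 1)].
Proof.
move=> hR P b hb; rewrite big_seq1 -(rl_transfer_unit hb).
rewrite -[LHS]/(sweedler b h) -(rl_transfer_Delta hb).
by rewrite [LHS](hR P _ (rl_transfer_balanced hb)) big_seq1.
Qed.

End HopfAlgebroid.

Unset Implicit Arguments.

Theorem lemma3p23 (k : fieldType) (A H : comAlgType k)
    (s t : {lrmorphism A -> H}) (eps : {lrmorphism H -> A})
    (Delta : H -> seq (H * H)) (S : {lrmorphism H -> H}) (I : {pred H}) :
  hopf_algebroid s t eps Delta S ->
  hopf_ideal s t eps Delta S I ->
  normal_ideal s t Delta S I ->
  forall h : H,
    tensor_eq (fun a (u : H) => u * t a) (fun a (v : H) => s a * v)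
              (fun _ => False) (fun v => v \in I) (Delta h) [:: (h, 1)]
    <->
    tensor_eq (fun a (u : H) => u * s a) (fun a (v : H) => s a * v)
              (fun u => u \in I) (fun _ => False) (Delta h) [:: (1, h)].
Proof.
move=> HA _ HN h; split.
  exact: (left_to_right HA HN).
exact: (right_to_left HA HN).
Qed.
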